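(* Suppose $|\mathit{Obs}|>1$. Then there is a CTL*KΔ formula $\varphi$ such that no CTL*K formula $\varphi'$ satisfies: for every model $M$, $M\models\varphi$ iff $M\models\varphi'$. That is, CTL*KΔ is not at most as expressive as CTL*K.
   Context: Fix a countably infinite set $\mathit{AP}$ of atomic propositions and a finite nonempty set $\mathit{Obs}$ of observations. For a word $w$ we write $w_i$ for its letter at position $i$ (positions start at $0$), $w_{\le i}$ for its prefix ending at position $i$, $|w|$ for the length of a finite word, and $\mathit{last}(w)$ for the last letter of a finite word; $w\preceq w'$ means $w$ is a prefix of $w'$. Syntax of CTL*KΔ (single agent): history formulas $\varphi::=p\mid\neg\varphi\mid\varphi\wedge\varphi\mid\mathbf A\psi\mid\mathbf K\varphi\mid\Delta^{o}\varphi$ and path formulas $\psi::=\varphi\mid\neg\psi\mid\psi\wedge\psi\mid\mathbf X\psi\mid\psi\,\mathbf U\,\psi$, with $p\in\mathit{AP}$ and $o\in\mathit{Obs}$; the formulas of the logic are the history formulas. CTL*K is the fragment of formulas containing no operator $\Delta^o$. A model is $M=(\mathit{AP}_f,S,T,V,\{\sim_o\}_{o\in\mathit{Obs}},s_\iota,o_\iota)$ where $\mathit{AP}_f\subseteq\mathit{AP}$ is finite, $S$ is a finite set of states, $T\subseteq S\times S$ is left-total, $V:S\to 2^{\mathit{AP}_f}$, each $\sim_o$ is an equivalence relation on $S$, $s_\iota\in S$ and $o_\iota\in\mathit{Obs}$. A path is an infinite sequence $\pi=s_0s_1\dots$ of states with $s_i\,T\,s_{i+1}$ for all $i$ (starting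 at any state); a history is a finite nonempty prefix of a path. An observation record is a finite word over $\mathit{Obs}\times\mathbb N$; $\epsilon$ is the empty record, $r\cdot(o,n)$ is $r$ with $(o,n)$ appended, and $r_{=n}$ is the subword of $r$ consisting of the pairs whose second component is $n$. The list $\mathit{ol}(r,n)$ is defined by $\mathit{ol}(r,0)=o_\iota\cdot o_1\cdots o_k$ if $r_{=0}=(o_1,0)\cdots(o_k,0)$, and $\mathit{ol}(r,n+1)=\mathit{last}(\mathit{ol}(r,n))\cdot o_1\cdots o_k$ if $r_{=n+1}=(o_1,n+1)\cdots(o_k,n+1)$. Two histories are equivalent, $h\approx_r h'$, if $|h|=|h'|$ and for every $i<|h|$ and every $o$ occurring in $\mathit{ol}(r,i)$, $h_i\sim_o h'_i$. Natural semantics: for a history $h$ and record $r$: $h,r\models p$ iff $p\in V(\mathit{last}(h))$; $h,r\models\neg\varphi$ iff not $h,r\models\varphi$; $h,r\models\varphi_1\wedge\varphi_2$ iff both hold; $h,r\models\mathbf A\psi$ iff for all paths $\pi$ with $h\preceq\pi$, $\pi,|h|-1,r\models\psi$; $h,r\models\mathbf K\varphi$ iff $h',r\models\varphi$ for all histories $h'$ with $h'\approx_r h$; $h,r\models\Delta^o\varphi$ iff $h,r\cdot(o,|h|-1)\models\varphi$. For a path $\pi$, $n\in\mathbb N$ and record $r$: $\pi,n,r\models\varphi$ iff $\pi_{\le n},r\models\varphi$; negation and conjunction as usual; $\pi,n,r\models\mathbf X\psi$ iff $\pi,n+1,r\models\psi$; $\pi,n,r\models\psi_1\mathbf U\psi_2$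 iff there is $m\ge n$ with $\pi,m,r\models\psi_2$ and $\pi,k,r\models\psi_1$ for all $n\le k<m$. A model $M$ satisfies $\varphi$, written $M\models\varphi$, iff $s_\iota,\epsilon\models\varphi$, where $s_\iota$ is viewed as a one-state history. *)

From mathcomp Require Import all_boot.
Set Implicit Arguments.
Unset Strict Implicit.
Unset Printing Implicit Defensive.

Section Logic.
Variable Obs : finType.

Inductive hform : Type :=
  | HProp  : nat -> hform
  | HNeg   : hform -> hform
  | HAnd   : hform -> hform -> hform
  | HA     : pform -> hform
  | HK     : hform -> hform
  | HDelta : Obs -> hform -> hform
with pform : Type :=
  | PH   : hform -> pform
  | PNeg : pform -> pform
  | PAnd : pform -> pform -> pform
  | PX   : pform -> pform
  | PU   : pform -> pform -> pform.

Fixpoint hnoDelta (f : hform) : bool :=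
  match f with
  | HProp _ => true
  | HNeg g => hnoDelta g
  | HAnd g1 g2 => hnoDelta g1 && hnoDelta g2
  | HA p => pnoDelta p
  | HK g => hnoDelta g
  | HDelta _ _ => false
  end
with pnoDelta (p : pform) : bool :=
  match p with
  | PH g => hnoDelta g
  | PNeg q => pnoDelta q
  | PAnd q1 q2 => pnoDelta q1 && pnoDelta q2
  | PX q => pnoDelta q
  | PU q1 q2 => pnoDelta q1 && pnoDelta q2
  end.

Record model : Type := Model {
  APf : seq nat;
  St : finType;
  Tr : rel St;
  Tr_total : forall s : St, exists s' : St, Tr s s';
  Val : St -> pred nat;
  Val_sub : forall (s : St) (p : nat), Val s p -> p \in APf;
  sim : Obs -> rel St;
  sim_equiv : forall o : Obs, equivalence_rel (sim o);
  s_init : St;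
  o_init : Obs
}.

Definition record := seq (Obs * nat).

Definition obs_at (r : record) (n : nat) : seq Obs :=
  [seq p.1 | p <- r & p.2 == n].

Fixpoint ol (o_iota : Obs) (r : record) (n : nat) : seq Obs :=
  match n with
  | 0 => o_iota :: obs_at r 0
  | n'.+1 => last o_iota (ol o_iota r n') :: obs_at r n'.+1
  end.

Section Sem.
Variable M : model.

Definition is_path (pi : nat -> St M) : Prop :=
  forall i, Tr (pi i) (pi i.+1).

Definition hprefix (h : seq (St M)) (pi : nat -> St M) : Prop :=
  forall i, i < size h -> nth (s_init M) h i = pi i.

Definition is_history (h : seq (St M)) : Prop :=
  h <> [::] /\ exists pi, is_path pi /\ hprefix h pi.

Definition hlast (h : seq (St M)) : St M :=
  match h with
  | [::] => s_init M
  | x :: t => last x t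
  end.

Definition hist_equiv (r : record) (h h' : seq (St M)) : Prop :=
  size h = size h' /\
  forall i, i < size h -> forall o, o \in ol (o_init M) r i ->
    sim o (nth (s_init M) h i) (nth (s_init M) h' i).

Definition pref (pi : nat -> St M) (n : nat) : seq (St M) := mkseq pi n.+1.

Fixpoint hsat (f : hform) (h : seq (St M)) (r : record) {struct f} : Prop :=
  match f with
  | HProp p => Val (hlast h) p
  | HNeg g => ~ hsat g h r
  | HAnd g1 g2 => hsat g1 h r /\ hsat g2 h r
  | HA q => forall pi, is_path pi -> hprefix h pi -> psat q pi (size h).-1 r
  | HK g => forall h', is_history h' -> hist_equiv r h' h -> hsat g h' r
  | HDelta o g => hsat g h (rcons r (o, (size h).-1))
  end
with psat (q : pform) (pi : nat -> St M) (n : nat) (r : record) {struct q} : Prop :=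
  match q with
  | PH g => hsat g (pref pi n) r
  | PNeg q' => ~ psat q' pi n r
  | PAnd q1 q2 => psat q1 pi n r /\ psat q2 pi n r
  | PX q' => psat q' pi n.+1 r
  | PU q1 q2 => exists m, n <= m /\ psat q2 pi m r /\
                  (forall k, n <= k -> k < m -> psat q1 pi k r)
  end.

Definition models (f : hform) : Prop := hsat f [:: s_init M] [::].

End Sem.
End Logic.

From Stdlib Require Import Setoid.
From mathcomp Require Import all_boot.

Set Implicit Arguments.
Unset Strict Implicit.
Unset Printing Implicit Defensive.

(* Without Delta the observation record stays empty, and under the empty
   record two histories are equivalent as soon as they are pointwise related
   by the initial observation.  Hence CTL*K cannot tell apart two models that
   differ only in the relations of the other observations.  Take two states,
   [p0] true only in the second one, everything related for the initial
   observation, and for another observation [o] either everything related or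
   only equal states.  After Delta^o, K (~ p0) holds at the initial state in
   the second model but fails in the first. *)

Scheme hform_mind := Induction for hform Sort Prop
  with pform_mind := Induction for pform Sort Prop.
Combined Scheme form_mind from hform_mind, pform_mind.

Section DeltaFree.
Variable Obs : finType.

Lemma ol_nil (oi : Obs) n : ol oi [::] n = [:: oi].
Proof. by elim: n => [|n IHn] //=; rewrite IHn. Qed.

Lemma hist_equiv_nil (M : model Obs) (h h' : seq (St M)) :
  hist_equiv [::] h h' <->
  size h = size h' /\ forall i, i < size h ->
    sim (m := M) (o_init M) (nth (s_init M) h i) (nth (s_init M) h' i).
Proof.
split=> [[Hsize Hsim] | [Hsize Hsim]]; split=> // i Hi.
  by apply: Hsim; rewrite // ol_nil mem_head.
by move=> o; rewrite ol_nil inE => /eqP ->; apply: Hsim.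
Qed.

Section WithSim.
Variables (M : model Obs) (s : Obs -> rel (St M)).
Hypothesis s_equiv : forall o, equivalence_rel (s o).

Definition with_sim : model Obs :=
  Model (@Tr_total _ M) (@Val_sub _ M) s_equiv (s_init M) (o_init M).

Hypothesis s_o_init : s (o_init M) =2 sim (m := M) (o_init M).

Lemma with_sim_hist_equiv_nil (h h' : seq (St M)) :
  hist_equiv (M := with_sim) [::] h h' <-> hist_equiv (M := M) [::] h h'.
Proof.
by split=> /hist_equiv_nil[Hsize Hsim]; apply/hist_equiv_nil; split=> // i Hi;
  have := Hsim i Hi; rewrite /with_sim /= s_o_init.
Qed.

Lemma noDelta_with_sim :
  (forall f, hnoDelta f -> forall h : seq (St M),
     hsat (M := with_sim) f h [::] <-> hsat (M := M) f h [::]) /\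
  (forall q, pnoDelta q -> forall (pi : nat -> St M) n,
     psat (M := with_sim) q pi n [::] <-> psat (M := M) q pi n [::]).
Proof.
apply: form_mind => //=.
- by move=> g IHg /IHg Hg h; rewrite Hg.
- by move=> g1 IH1 g2 IH2 /andP[/IH1 H1 /IH2 H2] h; rewrite H1 H2.
- by move=> q IHq /IHq Hq h; split=> Hsat pi Hpi Hpref; apply/Hq; apply: Hsat.
- move=> g IHg /IHg Hg h.
  by split=> Hsat h' Hh' /with_sim_hist_equiv_nil Heq; apply/Hg; apply: Hsat.
- by move=> g IHg /IHg Hg pi n; apply: Hg.
- by move=> q IHq /IHq Hq pi n; rewrite Hq.
- by move=> q1 IH1 q2 IH2 /andP[/IH1 H1 /IH2 H2] pi n; rewrite H1 H2.
- by move=> q IHq /IHq Hq pi n; apply: Hq.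
- move=> q1 IH1 q2 IH2 /andP[/IH1 H1 /IH2 H2] pi n.
  by split=> -[m [Hnm [/H2 Hm Hbefore]]]; exists m;
    split=> //; split=> // k Hnk Hkm; apply/H1; apply: Hbefore.
Qed.

End WithSim.
End DeltaFree.

Section TwoStates.
Variables (Obs : finType) (oi : Obs).

Definition full_rel : rel bool := fun _ _ => true.

Lemma full_rel_total (s : bool) : exists s' : bool, full_rel s s'.
Proof. by exists s. Qed.

Definition val_p0 (s : bool) : pred nat := fun p => s && (p == 0).

Lemma val_p0_sub (s : bool) (p : nat) : val_p0 s p -> p \in [:: 0].
Proof. by case/andP=> _ /eqP ->. Qed.

Lemma full_rel_equiv : equivalence_rel full_rel.
Proof. by []. Qed.

Definition coarse_two_states : model Obs :=
  @Model Obs [:: 0] bool full_rel full_rel_total val_p0 val_p0_sub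
    (fun _ => full_rel) (fun _ => full_rel_equiv) false oi.

Definition fine_sim (o : Obs) : rel bool := if o == oi then full_rel else eq_op.

Lemma fine_sim_equiv o : equivalence_rel (fine_sim o).
Proof.
rewrite /fine_sim; case: (o == oi) => // x y z /=.
by split=> // /eqP ->.
Qed.

Definition fine_two_states : model Obs :=
  @with_sim Obs coarse_two_states fine_sim fine_sim_equiv.

Lemma noDelta_fine_coarse f (h : seq bool) : hnoDelta f ->
  hsat (M := fine_two_states) f h [::] <->
  hsat (M := coarse_two_states) f h [::].
Proof.
have fine_sim_oi : fine_sim oi =2 full_rel.
  by move=> x y; rewrite /fine_sim eqxx.
move=> Hf.
exact: (@noDelta_with_sim _ coarse_two_states _ fine_sim_equiv fine_sim_oi).1.
Qed.

Definition blind_after (o : Obs) : hform Obs :=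
  HDelta o (HK (HNeg (@HProp Obs 0))).

Lemma coarse_not_blind_after o : ~ models coarse_two_states (blind_after o).
Proof.
move/(_ [:: true]); apply=> //.
by split=> //; exists xpredT; split=> // -[].
Qed.

Lemma fine_blind_after o : oi != o -> models fine_two_states (blind_after o).
Proof.
move=> Hoi h' [Hh' _] [Hsize Hsim].
case: h' Hh' Hsize Hsim => [|x [|]] // _ _ /(_ 0 isT o).
by rewrite /= /fine_sim eq_sym (negbTE Hoi) !inE eqxx orbT => /(_ isT) /eqP ->.
Qed.

End TwoStates.

Theorem mainTheorem9 (Obs : finType) (HObs : 1 < #|Obs|) :
  exists phi : hform Obs,
    forall phi' : hform Obs, hnoDelta phi' ->
      ~ (forall M : model Obs, models M phi <-> models M phi').
Proof.
have [oi [o [_ _ Hoi]]] := card_gt1P HObs.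
exists (blind_after o) => phi' Hphi' Hequiv.
have Hsame := noDelta_fine_coarse oi [:: false] Hphi'.
have Hcoarse := Hequiv (coarse_two_states oi).
have Hfine := Hequiv (fine_two_states oi).
have := @coarse_not_blind_after _ oi o; have := fine_blind_after Hoi.
rewrite /models in Hcoarse Hfine *; tauto.
Qed.
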